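(* Suppose $D$ is an effective divisor class on $X$ and $A_t$ is an ample divisor with $2A_t\cdot D\le A_t\cdot K$. Then $\chi(D)<\frac{n-1}{8}$. In particular, if $10\le n\le 17$ and $\chi(D)\ge1$, then $\chi(D)=1$.
   Context: Let $X$ be the blowup of $\mathbb{P}^2_{\mathbb{C}}$ at $n$ very general points, with $H$ the pullback of a line class, $E_i$ the exceptional divisors, $E=\sum_iE_i$, and $K=K_X=-3H+E$. For real $t$, $A_t=tH-E$. Write $\chi(D)=\chi(\mathcal{O}_X(D))$. A divisor class is effective if it is the class of an effective divisor (zero allowed). *)

From HB Require Import structures.
From mathcomp Require Import all_boot all_order all_algebra.
From mathcomp Require Import reals complex.
Set Implicit Arguments. Unset Strict Implicit. Unset Printing Implicit Defensive.
Import Order.TTheory GRing.Theory Num.Theory.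
Local Open Scope ring_scope.

Record fpoly (I : finType) (K : nzRingType) := FPoly {
  fp_bound : nat;
  fp_coef : {ffun {ffun I -> 'I_fp_bound.+1} -> K} }.

Definition fp_eval (I : finType) (K : comNzRingType) (P : fpoly I K) (z : I -> K) : K :=
  \sum_(a : {ffun I -> 'I_(fp_bound P).+1}) fp_coef P a * \prod_(v : I) z v ^+ a v.

Definition fp_nonzero (I : finType) (K : nzRingType) (P : fpoly I K) : Prop :=
  fp_coef P != 0.

(* pts p = (x-coordinate, y-coordinate) of the p-th point [x : y : 1].     *)
Definition config (K : Type) (n : nat) := 'I_n -> K * K.

Definition coords (K : Type) (n : nat) (pts : config K n) (v : 'I_n * bool) : K :=
  if v.2 then (pts v.1).2 else (pts v.1).1.

(* A property P holds for very general configurations of n points: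
   it holds outside a countable union of proper Zariski-closed subsets
   of the configuration space.                                              *)
Definition very_general (K : comNzRingType) (n : nat) (P : config K n -> Prop) : Prop :=
  exists F : nat -> fpoly ('I_n * bool)%type K,
    (forall k, fp_nonzero (F k)) /\
    forall pts : config K n, (forall k, fp_eval (F k) (coords pts) != 0) -> P pts.

(* The class (d, m) denotes D = d H - sum_i m_i E_i.
   Intersection form: H^2 = 1, E_i^2 = -1, H.E_i = 0, E_i.E_j = 0 (i<>j). *)

(* The plane curve {f = 0}, where f(x,y) = sum c_(i,j) x^i y^j has total degree
   <= d (dehomogenisation of a degree-d form), has multiplicity >= mu at (a,b):
   all Taylor coefficients of f at (a,b) of total order < mu vanish.          *)
Definition mult_ge (K : comNzRingType) (d : nat) (c : {ffun 'I_d.+1 * 'I_d.+1 -> K})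
  (ab : K * K) (mu : int) : Prop :=
  forall k l : nat, ((k + l)%:Z < mu)%R ->
    \sum_(i < d.+1) \sum_(j < d.+1)
       c (i, j) * ('C(i, k) * 'C(j, l))%:R * ab.1 ^+ (i - k) * ab.2 ^+ (j - l) = 0.

(* D = d H - sum m_i E_i is effective: D = C~ + sum a_i E_i (a_i >= 0) with C~
   the proper transform of a plane curve of degree d (possibly empty, d = 0),
   i.e. a nonzero polynomial of degree <= d with multiplicity >= m_i at p_i. *)
Definition effective (K : comNzRingType) (n : nat) (pts : config K n)
  (d : int) (m : 'I_n -> int) : Prop :=
  exists dn : nat, d = dn%:Z /\
    exists c : {ffun 'I_dn.+1 * 'I_dn.+1 -> K},
      c != 0 /\
      (forall i j : 'I_dn.+1, (dn < i + j)%N -> c (i, j) = 0) /\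
      (forall p : 'I_n, mult_ge c (pts p) (m p)).

Section Intersections.
Variable R : realType.

Definition idot (n : nat) (d : int) (m : 'I_n -> int) (d' : int) (m' : 'I_n -> int) : R :=
  (d * d')%:~R - \sum_(i < n) (m i * m' i)%:~R.

Definition KX_d : int := -3.
Definition KX_m (n : nat) : 'I_n -> int := fun _ => -1.

(* A_t . D  for A_t = t H - E *)
Definition Adot (n : nat) (t : R) (d : int) (m : 'I_n -> int) : R :=
  t * d%:~R - \sum_(i < n) (m i)%:~R.

Definition Asq (n : nat) (t : R) : R := t ^+ 2 - n%:R.

(* chi(O_X(D)) by Riemann-Roch: 1 + (D.D - D.K)/2 *)
Definition chi (n : nat) (d : int) (m : 'I_n -> int) : R :=
  1 + (idot d m d m - idot d m KX_d (@KX_m n)) / 2.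

(* Ampleness of the R-divisor A_t (Nakai-Moishezon criterion on a surface):
   A_t^2 > 0 and A_t . C > 0 for every nonzero effective class C. *)
Definition ample (n : nat) (pts : config R[i] n) (t : R) : Prop :=
  0 < Asq n t /\
  forall (d : int) (m : 'I_n -> int),
    effective pts d m -> (d != 0 \/ exists i, m i != 0) -> 0 < Adot t d m.

End Intersections.

Arguments idot {R n}.
Arguments Adot {R n}.
Arguments Asq {R}.
Arguments chi {R n}.
Arguments ample {R n}.

From HB Require Import structures.
From mathcomp Require Import all_boot all_order all_algebra.
From mathcomp Require Import reals complex.
From mathcomp Require Import ring lra zify.
Import Order.TTheory GRing.Theory Num.Theory.
Local Open Scope ring_scope.

(* Riemann-Roch gives 8 chi(D) = (n - 1) + F^2 for F = 2D - K, because K^2 = 9 - n.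
   The hypothesis says A_t.F <= 0, while H.F = 2d + 3 > 0; as A_t^2 > 0, the
   Cauchy-Schwarz inequality for the multiplicities (the Hodge index theorem on X)
   then forces F^2 < 0, whence chi(D) < (n - 1)/8.  Moreover chi(D) is an integer,
   since D.(D - K) = d(d + 3) - sum_i m_i(m_i + 1) is even; for n <= 17 this leaves
   chi(D) = 1.  No genericity of the points is used. *)

Lemma dvdz_mul_addr1 (k : int) : (2 %| k * (k + 1))%Z.
Proof.
have r_ge0 : (0 <= k %% 2)%Z by apply: modz_ge0.
have r_lt2 : (k %% 2 < 2)%Z by apply: ltz_pmod.
rewrite (divz_eq k 2).
move: (k %/ 2)%Z => q; have [->|->] : (k %% 2 = 0)%Z \/ (k %% 2 = 1)%Z by lia.
- by apply/dvdzP; exists (q * (q * 2 + 1)); ring.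
- by apply/dvdzP; exists ((q * 2 + 1) * (q + 1)); ring.
Qed.

Lemma sqr_sum_le_mul_sum_sqr {R : realFieldType} {n : nat} (x : 'I_n -> R) :
  (\sum_i x i) ^+ 2 <= n%:R * \sum_i x i ^+ 2.
Proof.
have double_sum : \sum_i \sum_j (x i - x j) ^+ 2
    = 2 * (n%:R * \sum_i x i ^+ 2 - (\sum_i x i) ^+ 2).
  have sqrB i j : (x i - x j) ^+ 2 = x i ^+ 2 + x j ^+ 2 - 2 * (x i * x j).
    by ring.
  under eq_bigr => i _ do under eq_bigr => j _ do rewrite sqrB.
  under eq_bigr => i _ do
    rewrite sumrB big_split /= sumr_const card_ord -mulr_sumr.
  rewrite sumrB big_split /= sumr_const card_ord -mulr_sumr.
  rewrite sumrMnl -mulr_natl (expr2 (\sum_i x i)) big_distrlr /=; ring.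
have : 0 <= \sum_i \sum_j (x i - x j) ^+ 2.
  by apply: sumr_ge0 => i _; apply: sumr_ge0 => j _; exact: sqr_ge0.
rewrite double_sum pmulr_rge0 //; lra.
Qed.

Lemma sumr_quadratic (R : comNzRingType) (n : nat) (x : 'I_n -> R) (a b c : R) :
  \sum_i (a * (x i * x i) + b * x i + c)
  = a * \sum_i x i * x i + b * \sum_i x i + c * n%:R.
Proof. by rewrite !big_split /= -!mulr_sumr sumr_const card_ord mulr_natr. Qed.

Section IntersectionNumbers.
Context {R : realType} {n : nat}.
Implicit Types (d : int) (m : 'I_n -> int) (t : R).

Lemma idotE d m d' m' :
  idot d m d' m' = d%:~R * d'%:~R - \sum_i ((m i)%:~R * (m' i)%:~R : R).
Proof. by rewrite /idot intrM; congr (_ - _); apply: eq_bigr => i _; rewrite intrM. Qed.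

Definition dbl_subK_d d : int := 2 * d - KX_d.
Definition dbl_subK_m m : 'I_n -> int := fun i => 2 * m i - KX_m i.

Lemma chi_dbl_subK d m :
  8 * (chi d m : R)
  = n%:R - 1 + idot (dbl_subK_d d) (dbl_subK_m m) (dbl_subK_d d) (dbl_subK_m m).
Proof.
rewrite /chi !idotE /dbl_subK_d /dbl_subK_m /KX_d /KX_m.
set S2 := \sum_i ((m i)%:~R * (m i)%:~R : R); set S1 := \sum_i ((m i)%:~R : R).
have -> : \sum_i ((2 * m i - -1)%:~R * (2 * m i - -1)%:~R : R) = 4 * S2 + 4 * S1 + 1 * n%:R.
  by rewrite -sumr_quadratic; apply: eq_bigr => i _; ring.
have -> : \sum_i ((m i)%:~R * (-1)%:~R : R) = 0 * S2 + (-1) * S1 + 0 * n%:R.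
  by rewrite -sumr_quadratic; apply: eq_bigr => i _; ring.
by field.
Qed.

Lemma Adot_dbl_subK t d m :
  Adot t (dbl_subK_d d) (dbl_subK_m m) = 2 * Adot t d m - Adot t KX_d (@KX_m n).
Proof.
rewrite /Adot /dbl_subK_d /dbl_subK_m /KX_d /KX_m.
have -> : \sum_i ((2 * m i - -1)%:~R : R) = \sum_i (2 * (m i)%:~R - (-1 : int)%:~R).
  by apply: eq_bigr => i _; ring.
by rewrite sumrB -mulr_sumr; ring.
Qed.

Lemma idot_self_lt0 t (f : int) (mu : 'I_n -> int) :
  0 < t -> n%:R < t ^+ 2 -> 0 < f -> Adot t f mu <= 0 -> idot f mu f mu < 0 :> R.
Proof.
rewrite /Adot idotE -(ltr0z R) => t_gt0 t_large f_gt0 deg_le0.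
set F := (f%:~R : R) in f_gt0 deg_le0 *; set S := \sum_i ((mu i)%:~R : R) in deg_le0.
have CS := sqr_sum_le_mul_sum_sqr (fun i => ((mu i)%:~R : R)).
rewrite -/S in CS; under eq_bigr do rewrite expr2 in CS.
set Q := \sum_i _ in CS *.
have tF_gt0 : 0 < t * F by rewrite mulr_gt0.
have tF_le_S : (t * F) ^+ 2 <= S ^+ 2 by nra.
have nF_lt : n%:R * F ^+ 2 < (t * F) ^+ 2 by rewrite exprMn ltr_pM2r ?exprn_gt0.
have : n%:R * F ^+ 2 < n%:R * Q by lra.
have n_ge0 : 0 <= n%:R :> R by [].
nra.
Qed.

Lemma chi_int d m : exists z : int, chi d m = z%:~R :> R.
Proof.
have /dvdzP [q even_DDK] : (2 %| d * (d + 3) - \sum_i m i * (m i + 1))%Z.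
  rewrite (_ : d * (d + 3) = d * (d + 1) + d * 2); last by ring.
  rewrite rpredB ?rpredD ?dvdz_mul_addr1 ?dvdz_mull ?rpred_sum // => i _.
  exact: dvdz_mul_addr1.
exists (1 + q).
have := congr1 (fun z : int => z%:~R : R) even_DDK.
rewrite /chi !idotE /KX_d /KX_m /= rmorphB rmorphM rmorph_sum /=.
set S2 := \sum_i ((m i)%:~R * (m i)%:~R : R); set S1 := \sum_i ((m i)%:~R : R).
have -> : \sum_i ((m i * (m i + 1))%:~R : R) = 1 * S2 + 1 * S1 + 0 * n%:R.
  by rewrite -sumr_quadratic; apply: eq_bigr => i _; ring.
have -> : \sum_i ((m i)%:~R * (-1)%:~R : R) = 0 * S2 + (-1) * S1 + 0 * n%:R.
  by rewrite -sumr_quadratic; apply: eq_bigr => i _; ring.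
move=> E; set X := (X in 1 + X / 2 = _).
have -> : X = (q * 2)%:~R by rewrite -E /X; ring.
by field.
Qed.

Section Ampleness.
Context {pts : config R[i] n}.

Lemma effective_line : effective pts 1 (fun=> 0).
Proof.
exists 1%N; split=> //.
exists [ffun ij : 'I_2 * 'I_2 => (ij == (ord0, ord0))%:R]; split; [|split].
- by apply/eqP => /ffunP /(_ (ord0, ord0)); rewrite !ffunE eqxx => /eqP; rewrite oner_eq0.
- move=> i j ij_gt1; rewrite ffunE; case: eqP => // [[i0 j0]].
  by rewrite i0 j0 in ij_gt1.
- by move=> p k l /=; lia.
Qed.

Lemma effective_deg_ge0 d m : effective pts d m -> 0 <= d.
Proof. by case=> dn [-> _]. Qed.

Lemma ample_gt0 t : ample pts t -> 0 < t.
Proof.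
case=> _ /(_ 1 (fun=> 0) effective_line (or_introl (oner_neq0 _))).
by rewrite /Adot big1 // subr0 mulr1.
Qed.

Lemma ample_sqr_gt t : ample pts t -> n%:R < t ^+ 2.
Proof. by case; rewrite /Asq subr_gt0. Qed.

End Ampleness.

End IntersectionNumbers.

Lemma very_general_of_forall (K : comNzRingType) (n : nat) (P : config K n -> Prop) :
  (forall pts, P pts) -> very_general P.
Proof.
move=> allP; exists (fun=> @FPoly _ _ 0 [ffun=> 1]); split=> [k|pts _]; last exact: allP.
by apply/eqP => /ffunP /(_ [ffun=> ord0]); rewrite !ffunE => /eqP; rewrite oner_eq0.
Qed.

Theorem proposition4p1 (R : realType) (n : nat) :
  very_general (K := R[i]) (n := n) (fun pts =>
    forall (d : int) (m : 'I_n -> int) (t : R),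
      ample pts t ->
      effective pts d m ->
      2 * Adot t d m <= Adot t KX_d (@KX_m n) ->
      (chi d m : R) < (n%:R - 1) / 8 /\
      ((10 <= n <= 17)%N -> 1 <= (chi d m : R) -> (chi d m : R) = 1)).
Proof.
apply: very_general_of_forall => pts d m t t_ample D_eff deg_le.
have /ample_gt0 t_gt0 := t_ample; have /ample_sqr_gt t_large := t_ample.
have /effective_deg_ge0 d_ge0 := D_eff.
have chi_lt : (chi d m : R) < (n%:R - 1) / 8.
  have : idot (dbl_subK_d d) (dbl_subK_m m) (dbl_subK_d d) (dbl_subK_m m) < 0 :> R.
    apply: (@idot_self_lt0 _ _ t) => //.
      by rewrite /dbl_subK_d /KX_d; lia.
    by rewrite Adot_dbl_subK subr_le0.
  have := chi_dbl_subK (R := R) d m; lra.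
split=> // /andP [_ n_le17] chi_ge1.
have n_le17R : n%:R <= 17 :> R by rewrite ler_nat.
have [z chiE] := chi_int (R := R) d m.
have : z%:~R < (2 : int)%:~R :> R by rewrite -chiE; lra.
move: chi_ge1; rewrite chiE ler1z ltr_int => z_ge1 z_lt2.
by have -> : z = 1 by lia.
Qed.
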